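(* Let $A\in\mathbb{C}^{m\times n}$ and $X\in\mathbb{C}^{n\times m}$. Then the following are equivalent: (1) $X\in A\{1,4^{\mathfrak{m}}\}$; (2) $XAA^{\sim}=A^{\sim}$; (3) $XA=P_{\mathcal{R}(A^{\sim}),\mathcal{N}(A)}$. In this case, $$A\{1,4^{\mathfrak{m}}\}=\left\{A^{(1,4^{\mathfrak{m}})}+Z(I_m-AA^{(1,4^{\mathfrak{m}})}) : Z\in\mathbb{C}^{n\times m}\right\},$$ where $A^{(1,4^{\mathfrak{m}})}\in A\{1,4^{\mathfrak{m}}\}$ is fixed but arbitrary.
   Context: For a positive integer $k$, the Minkowski metric matrix of order $k$ is $G_k=\mathrm{diag}(1,-I_{k-1})$ (with $G_1=(1)$). For $A\in\mathbb{C}^{m\times n}$, the Minkowski adjoint is $A^{\sim}=G_nA^*G_m$, where $A^*$ is the conjugate transpose. For $A\in\mathbb{C}^{m\times n}$ and $X\in\mathbb{C}^{n\times m}$ consider the equations $(1)\ AXA=A$, $(2)\ XAX=X$, $(3^{\mathfrak{m}})\ (AX)^{\sim}=AX$, $(4^{\mathfrak{m}})\ (XA)^{\sim}=XA$; $A\{i,\dots,k\}$ denotes the set of all $X$ satisfying the listed equations. $\mathcal{R}(\cdot)$ and $\mathcal{N}(\cdot)$ denote range and null space. For subspaces $\mathcal{S},\mathcal{T}\subseteq\mathbb{C}^n$ with $\mathcal{S}\oplus\mathcal{T}=\mathbb{C}^n$, $P_{\mathcal{S},\mathcal{T}}$ denotes the projector onto $\mathcal{S}$ along $\mathcal{T}$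 (statement (3) includes that this direct sum holds). *)

From HB Require Import structures.
From mathcomp Require Import all_boot all_order all_algebra.
Set Implicit Arguments. Unset Strict Implicit. Unset Printing Implicit Defensive.
Import Order.TTheory GRing.Theory Num.Theory.
Local Open Scope ring_scope.

Section Minkowski.
Variable C : numClosedFieldType.

Definition mink_G (k : nat) : 'M[C]_k :=
  \matrix_(i < k, j < k) (if i == j then (if val i == 0%N then 1 else -1) else 0).

Definition ctrmx (m n : nat) (A : 'M[C]_(m, n)) : 'M[C]_(n, m) :=
  (map_mx Num.conj A)^T.

Definition mink_adj (m n : nat) (A : 'M[C]_(m, n)) : 'M[C]_(n, m) :=
  mink_G n *m ctrmx A *m mink_G m.

Definition is_g14m (m n : nat) (A : 'M[C]_(m, n)) (X : 'M[C]_(n, m)) : Prop :=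
  A *m X *m A = A /\ mink_adj (X *m A) = X *m A.

Definition in_range (m n : nat) (A : 'M[C]_(m, n)) (v : 'cV[C]_m) : Prop :=
  exists w : 'cV[C]_n, v = A *m w.
Definition in_null (m n : nat) (A : 'M[C]_(m, n)) (v : 'cV[C]_n) : Prop :=
  A *m v = 0.

Definition is_proj_onto_along (n : nat) (S T : 'cV[C]_n -> Prop) (P : 'M[C]_n) : Prop :=
  [/\ (forall v, S v -> T v -> v = 0),
      (forall v, exists s t, [/\ S s, T t & v = s + t]) &
      (forall s t, S s -> T t -> P *m (s + t) = s)].
End Minkowski.

(* The Minkowski adjoint is an involutive anti-automorphism of the matrix
   category, because G_k is a real involution (G_k^* = G_k, G_k^2 = I).
   Hence X A A~ = A~ yields, after taking adjoints, A A~ X~ = A, and then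
   (XA)~ = A~ X~ = X (A A~ X~) = XA and AXA = A (XA)~ = A A~ X~ = A.
   For the projector, XA fixes R(A~), its complement I - XA maps into N(A),
   and R(A~) meets N(A) trivially because XA = A~ X~ is the identity on
   R(A~) and zero on N(A).  Finally all X in A{1,4^m} share the same XA, and
   the solutions of XA = A1 A are exactly A1 + Z (I - A A1). *)
From HB Require Import structures.
From mathcomp Require Import all_boot all_order all_algebra.
Import Order.TTheory GRing.Theory Num.Theory.
Local Open Scope ring_scope.

Lemma inner_inverse_mulmxl_eqP (R : pzRingType) (m n : nat)
    (A : 'M[R]_(m, n)) (A1 X : 'M[R]_(n, m)) :
  A *m A1 *m A = A ->
  X *m A = A1 *m A <-> exists Z : 'M[R]_(n, m), X = A1 + Z *m (1%:M - A *m A1).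
Proof.
move=> AA1A; split=> [XA_eq | [Z ->]].
  exists (X - A1).
  by rewrite mulmxBr mulmx1 mulmxBl !mulmxA XA_eq subrr subr0 addrC subrK.
by rewrite mulmxDl -mulmxA mulmxBl mul1mx AA1A subrr mulmx0 addr0.
Qed.

Lemma eq_mx_mulcV (R : pzRingType) (p q : nat) (M N : 'M[R]_(p, q)) :
  (forall v : 'cV_q, M *m v = N *m v) -> M = N.
Proof.
move=> eqMN; apply: trmx_inj; apply/row_matrixP => j.
by rewrite -!tr_col !colE eqMN.
Qed.

Section MinkowskiAdjoint.
Set Implicit Arguments.
Unset Strict Implicit.

Variable C : numClosedFieldType.

Lemma mink_GK (k : nat) : mink_G C k *m mink_G C k = 1%:M.
Proof.
apply/matrixP=> i j; rewrite !mxE (bigD1 i) //= big1 => [|l /negbTE nli].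
  rewrite !mxE eqxx addr0; case: (i =P j) => [->|_]; last by rewrite mulr0.
  by case: (val j == 0%N); rewrite ?mulrNN mulr1.
by rewrite !mxE eq_sym nli mul0r.
Qed.

Lemma ctrmx_mink_G (k : nat) : ctrmx (mink_G C k) = mink_G C k.
Proof.
apply/matrixP=> i j; rewrite !mxE eq_sym.
case: (i =P j) => [->|_]; last by rewrite conjC0.
by case: ifP; rewrite ?conjC1 ?conjCN1.
Qed.

Lemma ctrmx_mul (m n p : nat) (A : 'M[C]_(m, n)) (B : 'M[C]_(n, p)) :
  ctrmx (A *m B) = ctrmx B *m ctrmx A.
Proof. by rewrite /ctrmx map_mxM trmx_mul. Qed.

Lemma ctrmxK (m n : nat) (A : 'M[C]_(m, n)) : ctrmx (ctrmx A) = A.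
Proof. by apply/matrixP=> i j; rewrite !mxE conjCK. Qed.

Lemma mink_adj_mul (m n p : nat) (A : 'M[C]_(m, n)) (B : 'M[C]_(n, p)) :
  mink_adj (A *m B) = mink_adj B *m mink_adj A.
Proof.
rewrite /mink_adj ctrmx_mul -!mulmxA; congr (_ *m _).
by rewrite (mulmxA (mink_G C n)) mink_GK mul1mx.
Qed.

Lemma mink_adjK (m n : nat) (A : 'M[C]_(m, n)) : mink_adj (mink_adj A) = A.
Proof.
by rewrite /mink_adj !ctrmx_mul ctrmxK !ctrmx_mink_G !mulmxA mink_GK mul1mx
  -!mulmxA mink_GK mulmx1.
Qed.

Lemma g14mE (m n : nat) (A : 'M[C]_(m, n)) (X : 'M[C]_(n, m)) :
  is_g14m A X <-> X *m A *m mink_adj A = mink_adj A.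
Proof.
split=> [[AXA XA_sa] | XAA_eq].
  by rewrite -{1}XA_sa -mink_adj_mul mulmxA AXA.
have AAX_eq : A *m mink_adj A *m mink_adj X = A.
  have := congr1 (@mink_adj C n m) XAA_eq.
  by rewrite mink_adj_mul mink_adjK mink_adj_mul mulmxA.
have XA_sa : mink_adj (X *m A) = X *m A.
  by rewrite mink_adj_mul -{1}XAA_eq -mulmxA -(mulmxA X) (mulmxA A) AAX_eq.
by split=> //; rewrite -mulmxA -XA_sa mink_adj_mul mulmxA AAX_eq.
Qed.

Lemma g14m_eq_mulmxl (m n : nat) (A : 'M[C]_(m, n)) (X A1 : 'M[C]_(n, m)) :
  is_g14m A A1 -> is_g14m A X <-> X *m A = A1 *m A.
Proof.
move=> [AA1A A1A_sa]; split=> [[AXA XA_sa] | XA_eq].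
  have -> : X *m A = mink_adj (X *m A) *m mink_adj (A1 *m A).
    by rewrite XA_sa A1A_sa -mulmxA (mulmxA A) AA1A.
  by rewrite -mink_adj_mul -mulmxA (mulmxA A) AXA.
split; first by rewrite -mulmxA XA_eq mulmxA.
by rewrite XA_eq.
Qed.

Lemma proj_onto_range_along_null (m n k : nat) (A : 'M[C]_(m, n))
    (B : 'M[C]_(n, k)) (X : 'M[C]_(n, m)) (Y : 'M[C]_(k, n)) :
  A *m X *m A = A -> X *m A *m B = B -> X *m A = B *m Y ->
  is_proj_onto_along (in_range B) (in_null A) (X *m A).
Proof.
move=> AXA XAB_eq XA_eq; split.
- move=> _ [w ->] Aw0.
  by rewrite -XAB_eq -!mulmxA Aw0 mulmx0.
- move=> v; exists (X *m A *m v), (v - X *m A *m v); split.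
  + by exists (Y *m v); rewrite XA_eq mulmxA.
  + by rewrite /in_null mulmxBr !mulmxA AXA subrr.
  + by rewrite addrC subrK.
- move=> _ t [w ->] At0.
  by rewrite mulmxDr mulmxA XAB_eq -mulmxA At0 mulmx0 addr0.
Qed.

Lemma proj_onto_range_along_null_fixes (m n k : nat) (A : 'M[C]_(m, n))
    (B : 'M[C]_(n, k)) (P : 'M[C]_n) :
  is_proj_onto_along (in_range B) (in_null A) P -> P *m B = B.
Proof.
case=> _ _ projP; apply: eq_mx_mulcV => v.
have := projP (B *m v) 0 (ex_intro _ v erefl) (mulmx0 _ _).
by rewrite addr0 mulmxA.
Qed.

End MinkowskiAdjoint.

Theorem theorem4p6 (C : numClosedFieldType) (m n : nat)
    (Hm : (0 < m)%N) (Hn : (0 < n)%N) (A : 'M[C]_(m, n)) :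
  (forall X : 'M[C]_(n, m),
     (is_g14m A X <-> X *m A *m mink_adj A = mink_adj A) /\
     (is_g14m A X <-> is_proj_onto_along (in_range (mink_adj A)) (in_null A) (X *m A))) /\
  (forall A1 : 'M[C]_(n, m), is_g14m A A1 ->
     forall X : 'M[C]_(n, m),
       is_g14m A X <-> exists Z : 'M[C]_(n, m), X = A1 + Z *m (1%:M - A *m A1)).
Proof.
split=> [X | A1 A1_g14m X].
  split; first exact: g14mE.
  split=> [X_g14m | /proj_onto_range_along_null_fixes/g14mE //].
  have [AXA XA_sa] := X_g14m.
  apply: (proj_onto_range_along_null (Y := mink_adj X)) => //.
    exact/g14mE.
  by rewrite -XA_sa mink_adj_mul.
apply: (iff_trans (g14m_eq_mulmxl _ A1_g14m)).
by apply: inner_inverse_mulmxl_eqP; case: A1_g14m.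
Qed.
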